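(* For every integer $s \ge 2$, $R(s,s) \le s$ and $R(s,s) \ge p$, where $p$ is the smallest prime factor of $s$. Moreover, if $s$ is even then $R(s,s)=2$.
   Context: Let $Z_s$ be the ring of integers modulo $s$. A family $\mathcal{F} \subseteq Z_s^q$ is covering if for every ordered pair of distinct vectors $u,v \in \mathcal{F}$ and every $a \in Z_s$ there is a coordinate $i$ with $u_i - v_i = a$. $R(s,q)$ denotes the maximum possible cardinality of a covering family in $Z_s^q$. *)

From HB Require Import structures.
From mathcomp Require Import all_boot all_order all_algebra.
Set Implicit Arguments. Unset Strict Implicit. Unset Printing Implicit Defensive.
Import GRing.Theory.
Local Open Scope ring_scope.

(* Vectors of Z_s^q are finite functions 'I_q -> 'Z_s.  'Z_s is the ring of
   integers modulo s for s >= 2 (the only case used). *)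
Definition covering (s q : nat) (F : {set {ffun 'I_q -> 'Z_s}}) : bool :=
  [forall u in F, forall v in F, (u != v) ==>
     [forall a : 'Z_s, [exists i : 'I_q, u i - v i == a]]].

Definition R (s q : nat) : nat :=
  (\max_(F : {set {ffun 'I_q -> 'Z_s}} | covering F) #|F|)%N.

(** If [u != v] lie in a covering family of [Z_s^s], then [i |-> u i - v i]
    maps the [s] coordinates onto [Z_s], hence is a bijection. Consequently,
    for fixed coordinates [i != j], the map [u |-> u i - u j] is injective on
    the family, giving [R(s,s) <= s], and every difference [u - v] has the
    same coordinate sum [0 + 1 + ... + (s-1)]. For three members [u, v, w] this sum [S]
    satisfies [S + S = S] (from [(u - v) + (v - w) = u - w]), so [S = 0];
    but for even [s] the sum is [s/2 <> 0] modulo [s], hence [R(s,s) <= 2].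
    For the lower bound, the scalings [i |-> k i] for [k < p] form a covering
    family, since all differences [k - l] are units of [Z_s]. *)

From mathcomp Require Import all_boot all_order all_algebra.
From mathcomp Require Import zify ring.
Import GRing.Theory.

Set Implicit Arguments.
Unset Strict Implicit.
Unset Printing Implicit Defensive.

Lemma R_leq s q b : (forall F, @covering s q F -> #|F| <= b) -> R s q <= b.
Proof. by move=> le_b; apply/bigmax_leqP. Qed.

Lemma covering_card_leq_R s q (F : {set {ffun 'I_q -> 'Z_s}}) :
  covering F -> #|F| <= R s q.
Proof. exact: leq_bigmax_cond. Qed.

Lemma onto_card_inj (T T' : finType) (f : T -> T') :
  #|T| <= #|T'| -> (forall y, y \in codom f) -> injective f.
Proof.
move=> le_T_T' onto_f x y; apply: (@image_injP _ _ f T) => //.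
rewrite eqn_leq leq_image_card (leq_trans le_T_T') //.
by apply/subset_leq_card/subsetP => z _; apply: onto_f.
Qed.

Lemma coprime_lt_pdiv d s : 0 < d < pdiv s -> coprime d s.
Proof.
case/andP=> d_gt0 lt_d_pdiv; rewrite /coprime eqn_leq gcdn_gt0 d_gt0 andbT.
rewrite leqNgt; apply/negP=> gcd_gt1.
have := pdiv_min_dvd gcd_gt1 (dvdn_gcdr d s).
have := dvdn_leq d_gt0 (dvdn_gcdl d s).
lia.
Qed.

Lemma bin2_double_mod k : 'C(k.*2, 2) = k %[mod k.*2].
Proof.
case: k => [|k] //.
have -> : 'C(k.+1.*2, 2) = k * k.+1.*2 + k.+1.
  by rewrite bin2 -mul2n -mulnA mul2n doubleK; lia.
exact: modnMDl.
Qed.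

Local Open Scope ring_scope.

Section CoveringFamilies.

Variables (s q : nat) (F : {set {ffun 'I_q -> 'Z_s}}).
Hypothesis covF : covering F.

Lemma covering_diff_onto u v : u \in F -> v \in F -> u != v ->
  forall a : 'Z_s, a \in codom (fun i => u i - v i).
Proof.
move=> uF vF neq_uv a; move/forall_inP/(_ u uF)/forall_inP/(_ v vF): covF.
by rewrite neq_uv => /forallP/(_ a)/existsP[i /eqP <-]; apply: codom_f.
Qed.

End CoveringFamilies.

(* ['Z_n.+2] is convertible to ['I_n.+2], so coordinates double as residues. *)
Section SquareCoveringFamilies.

Variables (n : nat) (F : {set {ffun 'I_n.+2 -> 'Z_n.+2}}).
Hypothesis covF : covering F.

Lemma covering_diff_inj u v : u \in F -> v \in F -> u != v ->
  injective (fun i : 'I_n.+2 => u i - v i).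
Proof.
move=> uF vF neq_uv; apply: (@onto_card_inj _ 'Z_n.+2); first by rewrite !card_ord.
move=> a; exact: (covering_diff_onto covF uF vF neq_uv a).
Qed.

Lemma covering_card_leq : (#|F| <= n.+2)%N.
Proof.
pose h (u : {ffun 'I_n.+2 -> 'Z_n.+2}) : 'Z_n.+2 := u ord_max - u ord0.
have inj_h : {in F &, injective h}.
  move=> u v uF vF eq_h; apply/eqP/negP => /negP neq_uv.
  have same_diff : u ord_max - v ord_max = u ord0 - v ord0.
    have -> : u ord_max - v ord_max = h u - h v + (u ord0 - v ord0).
      by rewrite /h; ring.
    by rewrite eq_h subrr add0r.
  by have /(congr1 val) := covering_diff_inj uF vF neq_uv same_diff.
by rewrite -(card_in_imset inj_h) (leq_trans (max_card _)) ?card_ord.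
Qed.

Lemma covering_sum_diff u v : u \in F -> v \in F -> u != v ->
  \sum_(i : 'I_n.+2) (u i - v i) = \sum_(a : 'Z_n.+2) a.
Proof.
by move=> uF vF neq_uv; rewrite [RHS](reindex_inj (covering_diff_inj uF vF neq_uv)).
Qed.

Lemma covering_card_leq2 : \sum_(a : 'Z_n.+2) a != 0 -> (#|F| <= 2)%N.
Proof.
move=> sum_neq0; rewrite leqNgt; apply/negP.
case/card_gt2P=> [u [v [w [[uF vF wF] [neq_uv neq_vw neq_wu]]]]].
have neq_uw : u != w by rewrite eq_sym.
have : \sum_(i : 'I_n.+2) (u i - v i) + \sum_(i : 'I_n.+2) (v i - w i)
       = \sum_(i : 'I_n.+2) (u i - w i).
  by rewrite -big_split; apply: eq_bigr => i _ /=; rewrite addrA subrK.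
rewrite (covering_sum_diff uF vF neq_uv) (covering_sum_diff vF wF neq_vw).
rewrite (covering_sum_diff uF wF neq_uw) -[RHS]addr0 => /addrI/eqP.
exact/negP.
Qed.

End SquareCoveringFamilies.

Lemma sum_Zp n : \sum_(a : 'Z_n.+2) a = 'C(n.+2, 2)%:R.
Proof.
rewrite -bin2_sum big_mkord natr_sum.
by apply: eq_bigr => i _; rewrite natr_Zp.
Qed.

Lemma sum_Zp_neq0 n : ~~ odd n.+2 -> \sum_(a : 'Z_n.+2) a != 0.
Proof.
rewrite /= negbK sum_Zp => even_n; apply/negP => /eqP/(congr1 (@nat_of_ord _)).
rewrite val_Zp_nat //=.
have -> : n.+2 = n./2.+1.*2 by rewrite doubleS even_halfK.
by rewrite bin2_double_mod modn_small // -addnn addnS ltnS leq_addr.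
Qed.

Section Scalings.

Variable n : nat.

Definition scaling (c : 'Z_n.+2) : {ffun 'I_n.+2 -> 'Z_n.+2} :=
  [ffun i => c * (i : 'Z_n.+2)].

Lemma scaling_inj : injective scaling.
Proof.
move=> c d /(congr1 (fun u : {ffun 'I_n.+2 -> 'Z_n.+2} => u (1 : 'Z_n.+2))).
by rewrite !ffunE !mulr1.
Qed.

Lemma scaling_covering (C : {set 'Z_n.+2}) :
  {in C &, forall c d, c != d -> c - d \is a GRing.unit} ->
  covering (scaling @: C).
Proof.
move=> unit_diff; apply/forall_inP => _ /imsetP[c cC ->].
apply/forall_inP => _ /imsetP[d dC ->]; apply/implyP => neq_scal.
have neq_cd : c != d by apply: contraNneq neq_scal => ->.
apply/forallP => a; apply/existsP; exists ((c - d)^-1 * a).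
by rewrite !ffunE -mulrBl mulrA divrr ?mul1r ?unit_diff.
Qed.

Lemma natrB_unit k l : (k < l < pdiv n.+2)%N ->
  (l%:R - k%:R : 'Z_n.+2) \is a GRing.unit.
Proof.
case/andP=> lt_kl lt_l_pdiv; rewrite -natrB ?(ltnW lt_kl) // unitZpE // coprime_sym.
by apply: coprime_lt_pdiv; rewrite subn_gt0 lt_kl (leq_ltn_trans (leq_subr _ _)).
Qed.

Lemma exists_covering_pdiv :
  exists2 F : {set {ffun 'I_n.+2 -> 'Z_n.+2}}, covering F & #|F| = pdiv n.+2.
Proof.
have le_pdiv : (pdiv n.+2 <= n.+2)%N by apply: pdiv_leq.
pose C := [set (k%:R : 'Z_n.+2) | k : 'I_(pdiv n.+2)].
exists (scaling @: C).
  apply: scaling_covering => _ _ /imsetP[k _ ->] /imsetP[l _ ->] neq_kl.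
  have [lt_kl|lt_lk|eq_kl] := ltngtP k l; last by rewrite eq_kl eqxx in neq_kl.
    by rewrite -opprB unitrN natrB_unit // lt_kl ltn_ord.
  by rewrite natrB_unit // lt_lk ltn_ord.
rewrite card_imset; last exact: scaling_inj.
rewrite card_imset ?card_ord // => k l /(congr1 (@nat_of_ord _)).
rewrite !val_Zp_nat // !modn_small => [/val_inj //||]; exact: leq_trans le_pdiv.
Qed.

End Scalings.

Theorem proposition4p1 (s : nat) : (2 <= s)%N ->
  [/\ (R s s <= s)%N, (pdiv s <= R s s)%N & (~~ odd s -> R s s = 2%N)].
Proof.
case: s => [|[|n]] // _.
have [F covF card_F] := exists_covering_pdiv n.
have pdiv_leq_R : (pdiv n.+2 <= R n.+2 n.+2)%N.
  by rewrite -card_F covering_card_leq_R.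
split=> //; first exact: R_leq (@covering_card_leq n).
move=> even_s; apply/eqP; rewrite eqn_leq (leq_trans _ pdiv_leq_R) ?andbT.
  by apply: R_leq => G covG; apply: covering_card_leq2 covG (sum_Zp_neq0 even_s).
by rewrite prime_gt1 ?pdiv_prime.
Qed.
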